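(* Fix $K\ge1$ and $\alpha,\beta_1,\beta_2>0$. There exists a constant $C$ such that for all $n\ge2$ and every symmetric $0/1$ matrix $A$ of size $n\times n$ with zero diagonal, $$\max_{e\in\{1,\dots,K\}^n}\big|Q_B(e)-Q_{ML}(e)-Q_P(e)\big|\le\frac{C\log n}{n^2},$$ where $Q_P(e)=\frac1{n^2}\sum_{a:\,n_a(e)+\lfloor\alpha\rfloor\ge2}n_a(e)\log n_a(e)-\frac1n$. Consequently $\max_{e}|Q_B(e)-Q_{ML}(e)|=O(\log n/n)$.
   Context: For a labelling $e$: $n_a(e)=\#\{i:e_i=a\}$; $O_{ab}(e)=\sum_{i,j}A_{ij}1\{e_i=a,e_j=b\}$ for $a\ne b$, $O_{aa}(e)=\sum_{i<j}A_{ij}1\{e_i=e_j=a\}$; $n_{ab}(e)=n_a(e)n_b(e)$ for $a\ne b$, $n_{aa}(e)=\frac12n_a(e)(n_a(e)-1)$. Bayesian modularity: $Q_B(e)=\frac1{n^2}\sum_{1\le a\le b\le K}\log B\big(O_{ab}(e)+\beta_1,n_{ab}(e)-O_{ab}(e)+\beta_2\big)+\frac1{n^2}\sum_{a=1}^K\log\Gamma(n_a(e)+\alpha)$, $B$ the beta function. Likelihood modularity: $Q_{ML}(e)=\frac1{n^2}\sum_{1\le a\le b\le K}n_{ab}(e)\,\tau\big(O_{ab}(e)/n_{ab}(e)\big)$ with $\tau(x)=x\log x+(1-x)\log(1-x)$, $0\log0=0$, and terms with $n_{ab}(e)=0$ taken as $0$. *)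

From Stdlib Require Import Reals.
From Coquelicot Require Import Coquelicot.
Open Scope R_scope.

Fixpoint rsum (n : nat) (f : nat -> R) : R :=
  match n with O => 0 | S m => rsum m f + f m end.

Definition Gamma (x : R) : R :=
  RInt_gen (fun t => Rpower t (x - 1) * exp (- t)) (at_right 0) (Rbar_locally p_infty).

Definition Beta (x y : R) : R := Gamma x * Gamma y / Gamma (x + y).

Definition xlnx (x : R) : R := if Req_EM_T x 0 then 0 else x * ln x.

Definition tau (x : R) : R := xlnx x + xlnx (1 - x).

Definition ind (b : bool) : R := if b then 1 else 0.

(* Nodes are 0..n-1, communities are 1..K. *)
Definition adjacency (n : nat) (A : nat -> nat -> R) : Prop :=
  (forall i j, (i < n)%nat -> (j < n)%nat -> A i j = 0 \/ A i j = 1) /\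
  (forall i j, (i < n)%nat -> (j < n)%nat -> A i j = A j i) /\
  (forall i, (i < n)%nat -> A i i = 0).

Definition labelling (n K : nat) (e : nat -> nat) : Prop :=
  forall i, (i < n)%nat -> (1 <= e i <= K)%nat.

Definition n_a (n : nat) (e : nat -> nat) (a : nat) : R :=
  rsum n (fun i => ind (Nat.eqb (e i) a)).

Definition O_ab (n : nat) (A : nat -> nat -> R) (e : nat -> nat) (a b : nat) : R :=
  if Nat.eqb a b then
    rsum n (fun j => rsum j (fun i => A i j * ind (Nat.eqb (e i) a) * ind (Nat.eqb (e j) a)))
  else
    rsum n (fun i => rsum n (fun j => A i j * ind (Nat.eqb (e i) a) * ind (Nat.eqb (e j) b))).

Definition n_ab (n : nat) (e : nat -> nat) (a b : nat) : R :=
  if Nat.eqb a b then n_a n e a * (n_a n e a - 1) / 2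
  else n_a n e a * n_a n e b.

(* sum over 1 <= a <= b <= K *)
Definition sum_pairs (K : nat) (F : nat -> nat -> R) : R :=
  rsum K (fun b' => rsum (S b') (fun a' => F (S a') (S b'))).

Definition sum_classes (K : nat) (F : nat -> R) : R := rsum K (fun a' => F (S a')).

Definition Q_B (n K : nat) (alpha b1 b2 : R) (A : nat -> nat -> R) (e : nat -> nat) : R :=
  / (INR n ^ 2) * sum_pairs K (fun a b =>
      ln (Beta (O_ab n A e a b + b1) (n_ab n e a b - O_ab n A e a b + b2)))
  + / (INR n ^ 2) * sum_classes K (fun a => ln (Gamma (n_a n e a + alpha))).

Definition Q_ML (n K : nat) (A : nat -> nat -> R) (e : nat -> nat) : R :=
  / (INR n ^ 2) * sum_pairs K (fun a b =>
      if Req_EM_T (n_ab n e a b) 0 then 0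
      else n_ab n e a b * tau (O_ab n A e a b / n_ab n e a b)).

(* floor alpha = Int_part alpha *)
Definition Q_P (n K : nat) (alpha : R) (e : nat -> nat) : R :=
  / (INR n ^ 2) * sum_classes K (fun a =>
      if Rle_dec 2 (n_a n e a + IZR (Int_part alpha)) then xlnx (n_a n e a) else 0)
  - / INR n.

From Stdlib Require Import Reals Lra Psatz Lia Bool.
From Coquelicot Require Import Coquelicot.
Open Scope R_scope.

(* First-order Stirling: for y > 0, ln Gamma y = y ln y - y + O(|ln y| + 1), from an
   explicit integrable majorant of the Gamma integrand and its minimum on [y, y + 1].
   For 0 <= m <= n^2 and a fixed shift g > 0 this gives
   ln Gamma (m + g) = xlnx m - m + O(ln n).  Hence each Beta term of Q_B equals the
   matching term n_ab tau (O_ab / n_ab) of Q_ML up to O(ln n), and each Gamma term equals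
   n_a ln n_a - n_a up to O(ln n); the linear terms -n_a sum to -n, which is the -1/n of Q_P.
   Summing the O(K^2) errors gives the first bound; the second follows as Q_P = O(ln n / n). *)

Lemma rsum_ext n f g : (forall i, (i < n)%nat -> f i = g i) -> rsum n f = rsum n g.
Proof. induction n; simpl; intros H; auto. rewrite IHn, H; auto. Qed.

Lemma rsum_le n f g : (forall i, (i < n)%nat -> f i <= g i) -> rsum n f <= rsum n g.
Proof.
induction n; simpl; intros H; [lra|].
assert (f n <= g n) by auto. assert (rsum n f <= rsum n g) by auto. lra.
Qed.

Lemma rsum_plus n f g : rsum n (fun i => f i + g i) = rsum n f + rsum n g.
Proof. induction n; simpl; [ring|]. rewrite IHn; ring. Qed.

Lemma rsum_minus n f g : rsum n (fun i => f i - g i) = rsum n f - rsum n g.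
Proof. induction n; simpl; [ring|]. rewrite IHn; ring. Qed.

Lemma rsum_scal_l n c f : rsum n (fun i => c * f i) = c * rsum n f.
Proof. induction n; simpl; [ring|]. rewrite IHn; ring. Qed.

Lemma rsum_scal_r n c f : rsum n (fun i => f i * c) = rsum n f * c.
Proof. induction n; simpl; [ring|]. rewrite IHn; ring. Qed.

Lemma rsum_const n c : rsum n (fun _ => c) = INR n * c.
Proof. induction n; simpl rsum; [simpl; ring|]. rewrite IHn, S_INR; ring. Qed.

Lemma rsum_nonneg n f : (forall i, (i < n)%nat -> 0 <= f i) -> 0 <= rsum n f.
Proof. intros H. rewrite <- (Rmult_0_r (INR n)), <- rsum_const. now apply rsum_le. Qed.

Lemma rsum_abs_le n f c : (forall i, (i < n)%nat -> Rabs (f i) <= c) -> Rabs (rsum n f) <= INR n * c.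
Proof.
induction n; simpl rsum; intros H; [simpl; rewrite Rabs_R0; lra|].
rewrite S_INR. eapply Rle_trans; [apply Rabs_triang|].
assert (Rabs (f n) <= c) by auto. assert (Rabs (rsum n f) <= INR n * c) by auto. lra.
Qed.

Lemma rsum_exchange n m f :
  rsum n (fun i => rsum m (fun j => f i j)) = rsum m (fun j => rsum n (fun i => f i j)).
Proof.
induction n; simpl.
- induction m; simpl; auto. rewrite <- IHm; ring.
- rewrite IHn, <- rsum_plus. auto.
Qed.

Lemma sum_pairs_minus K f g :
  sum_pairs K (fun a b => f a b - g a b) = sum_pairs K f - sum_pairs K g.
Proof. unfold sum_pairs. rewrite <- rsum_minus. apply rsum_ext. intros. apply rsum_minus. Qed.

Lemma sum_classes_plus_minus K f g h :
  sum_classes K (fun a => f a - g a + h a) = sum_classes K f - sum_classes K g + sum_classes K h.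
Proof. unfold sum_classes. rewrite rsum_plus, rsum_minus. reflexivity. Qed.

Lemma sum_pairs_abs_le K f c : 0 <= c -> (forall a b, Rabs (f a b) <= c) ->
  Rabs (sum_pairs K f) <= INR K * (INR K * c).
Proof.
intros Hc H. unfold sum_pairs. apply rsum_abs_le. intros b Hb.
eapply Rle_trans; [apply rsum_abs_le; intros; apply H|].
apply Rmult_le_compat_r; auto. apply le_INR. lia.
Qed.

Lemma sum_classes_abs_le K f c : (forall a, Rabs (f a) <= c) -> Rabs (sum_classes K f) <= INR K * c.
Proof. intros H. unfold sum_classes. apply rsum_abs_le. intros; apply H. Qed.

Lemma exp_le_exp x y : x <= y -> exp x <= exp y.
Proof. intros [h|h]; [left; now apply exp_increasing | subst; lra]. Qed.

Lemma ln_nonneg x : 1 <= x -> 0 <= ln x.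
Proof. intros. rewrite <- ln_1. apply ln_le; lra. Qed.

Lemma ln_nonpos x : 0 < x <= 1 -> ln x <= 0.
Proof. intros. rewrite <- ln_1. apply ln_le; lra. Qed.

Lemma ln_le_sub_1 x : 0 < x -> ln x <= x - 1.
Proof.
intros Hx. rewrite <- (ln_exp (x - 1)). apply ln_le; auto.
generalize (exp_ineq1_le (x - 1)); lra.
Qed.

Lemma ln_2_le_1 : ln 2 <= 1.
Proof. generalize (ln_le_sub_1 2); lra. Qed.

Lemma ln_ge_half x : 2 <= x -> / 2 <= ln x.
Proof. intros. apply Rle_trans with (ln 2); [left; apply ln_lt_2 | apply ln_le; lra]. Qed.

Lemma ln_sq_succ_le n : 2 <= n -> ln (n * n + 1) <= 3 * ln n.
Proof.
intros Hn. replace (3 * ln n) with (ln (n * n * n)).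
- apply ln_le; nra.
- rewrite !ln_mult by nra. ring.
Qed.

Lemma xlnx_pos x : 0 < x -> xlnx x = x * ln x.
Proof. intros. unfold xlnx. destruct (Req_EM_T x 0); [lra|auto]. Qed.

Lemma xlnx_0 : xlnx 0 = 0.
Proof. unfold xlnx. destruct (Req_EM_T 0 0); [auto|lra]. Qed.

Lemma xlnx_ge x : 0 < x -> x - 1 <= x * ln x.
Proof.
intros Hx. generalize (ln_le_sub_1 (/ x) (Rinv_0_lt_compat x Hx)).
rewrite ln_Rinv by lra. intros H.
assert (x * (- ln x) <= x * (/ x - 1)) by (apply Rmult_le_compat_l; lra).
assert (x * / x = 1) by (field; lra). nra.
Qed.

Lemma xlnx_div N y : 0 < N -> 0 <= y -> N * xlnx (y / N) = xlnx y - y * ln N.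
Proof.
intros HN Hy. destruct (Req_dec y 0) as [->|Hy0].
- unfold Rdiv. rewrite Rmult_0_l, xlnx_0. ring.
- rewrite !xlnx_pos by (try apply Rdiv_lt_0_compat; lra).
  rewrite ln_div by lra. field. lra.
Qed.

Lemma Rabs_xlnx_lt_3 m : 0 <= m < 3 -> Rabs (xlnx m) <= 6.
Proof.
intros Hm. destruct (Req_dec m 0) as [->|Hm0]; [rewrite xlnx_0, Rabs_R0; lra|].
rewrite xlnx_pos by lra.
assert (m * ln m <= m * (m - 1)) by (apply Rmult_le_compat_l; [|apply ln_le_sub_1]; lra).
generalize (xlnx_ge m). intros. apply Rabs_le; split; nra.
Qed.

Lemma Rabs_xlnx_le m N : 1 <= N -> 0 <= m <= N -> Rabs (xlnx m) <= N * ln N + 1.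
Proof.
intros HN Hm. generalize (ln_nonneg N HN). intros.
destruct (Req_dec m 0) as [->|Hm0]; [rewrite xlnx_0, Rabs_R0; nra|].
rewrite xlnx_pos by lra.
assert (ln m <= ln N) by (apply ln_le; lra).
generalize (xlnx_ge m). intros. apply Rabs_le; split; nra.
Qed.

Lemma continuous_of_ex_derive (f : R -> R) t : ex_derive f t -> continuous f t.
Proof. apply (ex_derive_continuous (K:=R_AbsRing) (V:=R_NormedModule)). Qed.

Lemma ex_RInt_continuous_on (f : R -> R) a b : a <= b ->
  (forall t, a <= t <= b -> continuous f t) -> ex_RInt f a b.
Proof.
intros Hab H. apply (ex_RInt_continuous (V:=R_CompleteNormedModule)).
intros z Hz. rewrite Rmin_left, Rmax_right in Hz by lra. auto.
Qed.

Lemma RInt_of_is_derive (G g : R -> R) a b : a <= b ->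
  (forall t, a <= t <= b -> is_derive G t (g t)) ->
  (forall t, a <= t <= b -> continuous g t) -> RInt g a b = G b - G a.
Proof.
intros Hab Hd Hc. apply (is_RInt_unique (V:=R_CompleteNormedModule)).
apply (is_RInt_derive (V:=R_CompleteNormedModule));
  intros z Hz; rewrite Rmin_left, Rmax_right in Hz by lra; auto.
Qed.

Lemma RInt_ge_const (f : R -> R) a b k : a <= b -> ex_RInt f a b ->
  (forall t, a < t < b -> k <= f t) -> (b - a) * k <= RInt f a b.
Proof.
intros Hab Hex H.
replace ((b - a) * k) with (RInt (fun _ => k) a b)
  by (rewrite (RInt_const (V:=R_CompleteNormedModule)); reflexivity).
apply RInt_le; auto. apply ex_RInt_const.
Qed.

Lemma RInt_le_RInt_superinterval (f : R -> R) a a0 b0 b :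
  a <= a0 <= b0 -> b0 <= b -> ex_RInt f a b -> (forall t, a <= t <= b -> 0 <= f t) ->
  RInt f a0 b0 <= RInt f a b.
Proof.
intros Ha Hb Hex Hp.
assert (Hsub : forall c d, a <= c <= d -> d <= b -> ex_RInt f c d)
  by (intros c d Hc Hd; apply (ex_RInt_Chasles_1 (V:=R_CompleteNormedModule) f c d b); [lra|];
      apply (ex_RInt_Chasles_2 (V:=R_CompleteNormedModule) f a c b); [lra|auto]).
rewrite <- (RInt_Chasles f a a0 b) by (apply Hsub; lra).
rewrite <- (RInt_Chasles f a0 b0 b) by (apply Hsub; lra).
assert (0 <= RInt f a a0) by (apply RInt_ge_0; [lra | apply Hsub; lra | intros; apply Hp; lra]).
assert (0 <= RInt f b0 b) by (apply RInt_ge_0; [lra | apply Hsub; lra | intros; apply Hp; lra]).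
unfold plus; simpl. lra.
Qed.

(* The improper integral is the supremum of the integrals over the compact
   subintervals [a, b] of (0, +oo), which increase with [a, b] as f >= 0. *)
Lemma is_RInt_gen_nonneg_bounded (f : R -> R) (M : R) :
  (forall t, 0 < t -> continuous f t) -> (forall t, 0 < t -> 0 <= f t) ->
  (forall a b, 0 < a < b -> RInt f a b <= M) ->
  exists L, is_RInt_gen f (at_right 0) (Rbar_locally p_infty) L /\ L <= M /\
    (forall a b, 0 < a < b -> RInt f a b <= L).
Proof.
intros Hc Hp HM.
assert (Hex : forall a b, 0 < a -> 0 < b -> ex_RInt f a b).
{ intros a b Ha Hb. apply (ex_RInt_continuous (V:=R_CompleteNormedModule)). intros z Hz.
  apply Hc. assert (0 < Rmin a b) by (apply Rmin_glb_lt; lra). lra. }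
set (E := fun r => exists a b, 0 < a < b /\ r = RInt f a b).
assert (HB : bound E) by (exists M; intros r [a [b [Hab ->]]]; now apply HM).
assert (HE : exists r, E r) by (exists (RInt f 1 2), 1, 2; split; [lra|auto]).
destruct (completeness E HB HE) as [L [HL1 HL2]].
exists L; split; [|split].
- intros P [eps HP].
  assert (Hlt : exists a0 b0, 0 < a0 < b0 /\ L - eps < RInt f a0 b0).
  { apply Classical_Prop.NNPP. intros Hn.
    assert (L <= L - eps); [|destruct eps; simpl in *; lra].
    apply HL2. intros r [a [b [Hab ->]]].
    apply Rnot_lt_le. intros Hr. apply Hn. exists a, b. auto. }
  destruct Hlt as [a0 [b0 [Hab0 Hgt]]].
  apply (Filter_prod _ _ _ (fun a => 0 < a < a0) (fun b => b0 < b)).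
  + exists (mkposreal a0 ltac:(lra)). simpl. intros y Hy Hy0. split; auto.
    change (Rabs (y - 0) < a0) in Hy. apply Rabs_lt_between in Hy. lra.
  + exists b0. auto.
  + intros a b Ha Hb. simpl. exists (RInt f a b). split.
    * exact (RInt_correct (V:=R_CompleteNormedModule) f a b (Hex a b ltac:(lra) ltac:(lra))).
    * apply HP. change (Rabs (RInt f a b - L) < eps).
      assert (RInt f a b <= L) by (apply HL1; exists a, b; split; [lra|auto]).
      assert (RInt f a0 b0 <= RInt f a b)
        by (apply RInt_le_RInt_superinterval; [lra | lra | apply Hex; lra | intros; apply Hp; lra]).
      apply Rabs_lt_between; lra.
- apply HL2. intros r [a [b [Hab ->]]]. now apply HM.
- intros a b Hab. apply HL1. exists a, b; auto.
Qed.

Definition gamma_integrand (x t : R) := Rpower t (x - 1) * exp (- t).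

Lemma gamma_integrand_continuous x t : 0 < t -> continuous (gamma_integrand x) t.
Proof. intros Ht. apply continuous_of_ex_derive. unfold gamma_integrand, Rpower. auto_derive. lra. Qed.

Lemma gamma_integrand_pos x t : 0 < gamma_integrand x t.
Proof. unfold gamma_integrand, Rpower. apply Rmult_lt_0_compat; apply exp_pos. Qed.

Lemma ex_RInt_gamma_integrand x a b : 0 < a <= b -> ex_RInt (gamma_integrand x) a b.
Proof. intros. apply ex_RInt_continuous_on; [lra|]. intros; apply gamma_integrand_continuous; lra. Qed.

Lemma Gamma_sup x M : 0 < x -> (forall a b, 0 < a < b -> RInt (gamma_integrand x) a b <= M) ->
  Gamma x <= M /\ (forall a b, 0 < a < b -> RInt (gamma_integrand x) a b <= Gamma x).
Proof.
intros Hx HM.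
destruct (is_RInt_gen_nonneg_bounded (gamma_integrand x) M (gamma_integrand_continuous x)
  (fun t _ => Rlt_le _ _ (gamma_integrand_pos x t)) HM) as [L [HL [HLM HLa]]].
replace (Gamma x) with L; [auto|].
symmetry. unfold Gamma. apply (is_RInt_gen_unique (V:=R_CompleteNormedModule)). exact HL.
Qed.

(* (x-1) ln (t/x) <= (x-1) (t/x - 1) gives the majorant t^(x-1) e^(-t) <= x^(x-1) e^(1-x) e^(-t/x). *)
Lemma RInt_gamma_integrand_le_ge1 x a b : 1 <= x -> 0 < a < b ->
  RInt (gamma_integrand x) a b <= x * Rpower x (x - 1) * exp (1 - x).
Proof.
intros Hx Hab.
set (c := Rpower x (x - 1) * exp (1 - x)).
assert (Hc : 0 < c) by (unfold c, Rpower; apply Rmult_lt_0_compat; apply exp_pos).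
set (g := fun t => c * exp (- t / x)).
apply Rle_trans with (RInt g a b).
- apply RInt_le; [lra | apply ex_RInt_gamma_integrand; lra | |].
  + apply ex_RInt_continuous_on; [lra|]. intros. apply continuous_of_ex_derive. unfold g. auto_derive. lra.
  + intros t Ht. unfold gamma_integrand, g, c, Rpower. rewrite <- !exp_plus. apply exp_le_exp.
    assert (Hlog := ln_le_sub_1 (t / x) ltac:(apply Rdiv_lt_0_compat; lra)).
    rewrite ln_div in Hlog by lra.
    assert (0 <= (x - 1) * (t / x - 1 - (ln t - ln x))) by (apply Rmult_le_pos; lra).
    assert ((x - 1) * ln x + (1 - x) + - t / x - ((x - 1) * ln t + - t)
       = (x - 1) * (t / x - 1 - (ln t - ln x))) by (field; lra).
    lra.
- rewrite (RInt_of_is_derive (fun t => - (x * c) * exp (- t / x)) g a b); [| lra | |].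
  + fold c. assert (0 < exp (- b / x)) by apply exp_pos.
    assert (exp (- a / x) <= 1).
    { rewrite <- exp_0. apply exp_le_exp. unfold Rdiv.
      assert (0 < / x) by (apply Rinv_0_lt_compat; lra). nra. }
    replace (x * Rpower x (x - 1) * exp (1 - x)) with (x * c) by (unfold c; ring).
    assert (0 < x * c) by (apply Rmult_lt_0_compat; lra). nra.
  + intros t Ht. unfold g. auto_derive; auto. unfold Rdiv. field. lra.
  + intros. apply continuous_of_ex_derive. unfold g. auto_derive. lra.
Qed.

(* For 0 < x <= 1 we have t^x <= 1 + t, so the integrand is majorized by
   g = t^(x-1) e^(-t) + (1 + t - t^x) e^(-t) / x, the derivative of (t^x - 2 - t) e^(-t) / x. *)
Lemma RInt_gamma_integrand_le_le1 x a b : 0 < x <= 1 -> 0 < a < b ->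
  RInt (gamma_integrand x) a b <= 2 / x.
Proof.
intros Hx Hab.
set (g := fun t => exp ((x - 1) * ln t) * exp (- t) - exp (x * ln t) * exp (- t) / x
                   + (1 + t) * exp (- t) / x).
assert (Hg : forall t, 0 < t -> continuous g t)
  by (intros; apply continuous_of_ex_derive; unfold g; auto_derive; repeat split; lra).
assert (Hpow : forall t, 0 < t -> exp (x * ln t) <= 1 + t).
{ intros t Ht. rewrite <- (exp_ln (1 + t)) by lra. apply exp_le_exp.
  assert (ln t <= ln (1 + t)) by (apply ln_le; lra).
  generalize (ln_nonneg (1 + t)). intros.
  destruct (Rle_dec t 1).
  - generalize (ln_nonpos t). intros. nra.
  - generalize (ln_nonneg t). intros. nra. }
apply Rle_trans with (RInt g a b).
- apply RInt_le; [lra | apply ex_RInt_gamma_integrand; lra |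
    apply ex_RInt_continuous_on; [lra | intros; apply Hg; lra] |].
  intros t Ht. unfold gamma_integrand, g, Rpower.
  assert (Hpt := Hpow t ltac:(lra)).
  assert (0 < exp (- t)) by apply exp_pos.
  assert (0 < / x) by (apply Rinv_0_lt_compat; lra).
  unfold Rdiv. assert (0 <= exp (- t) * / x * (1 + t - exp (x * ln t))) by (apply Rmult_le_pos; nra).
  nra.
- rewrite (RInt_of_is_derive (fun t => exp (x * ln t) * exp (- t) / x - (2 + t) * exp (- t) / x)
    g a b); [| lra | | intros; apply Hg; lra].
  + assert (Hb := Hpow b ltac:(lra)).
    assert (0 < exp (- a)) by apply exp_pos.
    assert (0 < exp (- b)) by apply exp_pos.
    assert (0 < exp (x * ln a)) by apply exp_pos.
    assert ((2 + a) * exp (- a) <= 2).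
    { assert (Hexp := exp_ineq1_le a).
      assert (exp a * exp (- a) = 1) by (rewrite <- exp_plus, Rplus_opp_r; apply exp_0).
      nra. }
    assert (0 < / x) by (apply Rinv_0_lt_compat; lra).
    assert (exp (- b) * (exp (x * ln b) - 2 - b) <= 0) by nra.
    assert (0 <= exp (x * ln a) * exp (- a)) by nra.
    apply Rle_trans with (/ x * (exp (- b) * (exp (x * ln b) - 2 - b)
      - exp (x * ln a) * exp (- a) + (2 + a) * exp (- a))).
    * right. unfold Rdiv. ring.
    * unfold Rdiv. rewrite (Rmult_comm 2). apply Rmult_le_compat_l; lra.
  + intros t Ht. unfold g. auto_derive; [lra|].
    replace ((x - 1) * ln t) with (x * ln t + - ln t) by ring.
    rewrite exp_plus, (exp_Ropp (ln t)), exp_ln by lra. field. lra.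
Qed.

Lemma Gamma_le_ge1 x : 1 <= x -> Gamma x <= x * Rpower x (x - 1) * exp (1 - x).
Proof. intros. apply Gamma_sup; [lra|]. intros; now apply RInt_gamma_integrand_le_ge1. Qed.

Lemma Gamma_le_le1 x : 0 < x <= 1 -> Gamma x <= 2 / x.
Proof. intros. apply Gamma_sup; [lra|]. intros; now apply RInt_gamma_integrand_le_le1. Qed.

Lemma Gamma_ge x k : 0 < x -> (forall t, x < t < x + 1 -> k <= gamma_integrand x t) -> k <= Gamma x.
Proof.
intros Hx Hk.
assert (Hsup : forall a b, 0 < a < b -> RInt (gamma_integrand x) a b <= Gamma x).
{ destruct (Rle_dec 1 x).
  - apply (Gamma_sup x (x * Rpower x (x - 1) * exp (1 - x)) Hx).
    intros; now apply RInt_gamma_integrand_le_ge1.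
  - apply (Gamma_sup x (2 / x) Hx). intros; apply RInt_gamma_integrand_le_le1; lra. }
apply Rle_trans with (RInt (gamma_integrand x) x (x + 1)); [|apply Hsup; lra].
replace k with ((x + 1 - x) * k) by ring.
apply RInt_ge_const; [lra | apply ex_RInt_gamma_integrand; lra | auto].
Qed.

Lemma ln_Gamma_approx_ge1 x : 1 <= x ->
  0 < Gamma x /\ Rabs (ln (Gamma x) - (x * ln x - x)) <= ln x + 4.
Proof.
intros Hx.
set (k := Rpower x (x - 1) * exp (- (x + 1))).
assert (Hk0 : 0 < k) by (unfold k, Rpower; apply Rmult_lt_0_compat; apply exp_pos).
assert (Hk : k <= Gamma x).
{ apply Gamma_ge; [lra|]. intros t Ht. unfold k, gamma_integrand, Rpower.
  apply Rmult_le_compat; try (left; apply exp_pos); apply exp_le_exp; [|lra].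
  assert (ln x <= ln t) by (apply ln_le; lra). nra. }
split; [lra|].
assert (L1 : ln k <= ln (Gamma x)) by (apply ln_le; lra).
assert (L2 : ln (Gamma x) <= ln (x * Rpower x (x - 1) * exp (1 - x)))
  by (apply ln_le; [lra | apply Gamma_le_ge1; lra]).
unfold k, Rpower in L1, L2.
rewrite ln_mult, !ln_exp in L1 by apply exp_pos.
rewrite !ln_mult, !ln_exp in L2 by (try apply Rmult_lt_0_compat; try apply exp_pos; lra).
generalize (ln_nonneg x Hx). intros. apply Rabs_le; split; nra.
Qed.

Lemma ln_Gamma_approx_le1 x : 0 < x <= 1 ->
  0 < Gamma x /\ Rabs (ln (Gamma x) - (x * ln x - x)) <= - ln x + 4.
Proof.
intros Hx.
assert (Hk : exp (- 3) <= Gamma x).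
{ apply Gamma_ge; [lra|]. intros t Ht. unfold gamma_integrand, Rpower.
  replace (- 3) with (- 1 + - 2) by ring. rewrite exp_plus.
  apply Rmult_le_compat; try (left; apply exp_pos); apply exp_le_exp; [|lra].
  assert (ln t <= ln 2) by (apply ln_le; lra).
  generalize ln_2_le_1. intros. destruct (Rle_dec 0 (ln t)); nra. }
assert (0 < exp (- 3)) by apply exp_pos.
split; [lra|].
assert (L1 : ln (exp (- 3)) <= ln (Gamma x)) by (apply ln_le; lra).
assert (L2 : ln (Gamma x) <= ln (2 / x)) by (apply ln_le; [lra | apply Gamma_le_le1; lra]).
rewrite ln_exp in L1. unfold Rdiv in L2.
rewrite ln_mult, ln_Rinv in L2 by (try apply Rinv_0_lt_compat; lra).
generalize (ln_nonpos x Hx) (xlnx_ge x (proj1 Hx)) ln_2_le_1. intros.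
apply Rabs_le; split; nra.
Qed.

Lemma ln_Gamma_approx x : 0 < x ->
  0 < Gamma x /\ Rabs (ln (Gamma x) - (x * ln x - x)) <= Rabs (ln x) + 4.
Proof.
intros Hx. destruct (Rle_dec 1 x).
- rewrite (Rabs_right (ln x)) by (apply Rle_ge, ln_nonneg; lra). now apply ln_Gamma_approx_ge1.
- rewrite (Rabs_left1 (ln x)) by (apply ln_nonpos; lra). apply ln_Gamma_approx_le1; lra.
Qed.

Lemma Rabs_ln_shift_le n m g : 2 <= n -> 0 <= m <= n * n -> 0 < g ->
  Rabs (ln (m + g)) <= Rabs (ln g) + ln (1 + g) + 3 * ln n.
Proof.
intros Hn Hm Hg.
assert (ln (n * n + 1) <= 3 * ln n) by now apply ln_sq_succ_le.
generalize (ln_nonneg (1 + g)) (ln_nonneg (n * n + 1)) (Rabs_pos (ln g)) (Rle_abs (- ln g)).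
rewrite Rabs_Ropp. intros.
destruct (Rle_dec 0 (ln (m + g))).
- rewrite Rabs_right by lra.
  assert (Hprod : ln (m + g) <= ln ((n * n + 1) * (1 + g))) by (apply ln_le; nra).
  rewrite ln_mult in Hprod by nra. lra.
- rewrite Rabs_left by lra.
  assert (ln g <= ln (m + g)) by (apply ln_le; lra). lra.
Qed.

Lemma xlnx_shift_le m g : 0 <= m -> 0 < g ->
  Rabs (((m + g) * ln (m + g) - (m + g)) - (xlnx m - m)) <= g * Rabs (ln (m + g)) + g.
Proof.
intros Hm Hg.
assert (Habs : Rabs (g * ln (m + g)) = g * Rabs (ln (m + g))) by (rewrite Rabs_mult, Rabs_right; lra).
destruct (Req_dec m 0) as [->|Hm0].
- rewrite xlnx_0, !Rplus_0_l in *.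
  replace (g * ln g - g - (0 - 0)) with (g * ln g + - g) by ring.
  eapply Rle_trans; [apply Rabs_triang|]. rewrite Rabs_Ropp, (Rabs_right g) by lra. lra.
- rewrite xlnx_pos by lra.
  assert (Hup := ln_le_sub_1 ((m + g) / m) ltac:(apply Rdiv_lt_0_compat; lra)).
  assert (Hlow : 0 <= ln ((m + g) / m)).
  { apply ln_nonneg. apply (Rmult_le_reg_r m); [lra|].
    unfold Rdiv. rewrite Rmult_assoc, Rinv_l, Rmult_1_r; lra. }
  rewrite ln_div in Hup, Hlow by lra.
  assert (m * (ln (m + g) - ln m) <= g).
  { assert (m * (ln (m + g) - ln m) <= m * ((m + g) / m - 1)) by (apply Rmult_le_compat_l; lra).
    replace (m * ((m + g) / m - 1)) with g in * by (field; lra). lra. }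
  assert (0 <= m * (ln (m + g) - ln m)) by (apply Rmult_le_pos; lra).
  replace ((m + g) * ln (m + g) - (m + g) - (m * ln m - m))
    with (m * (ln (m + g) - ln m) + g * ln (m + g) - g) by ring.
  generalize (Rle_abs (g * ln (m + g))) (Rle_abs (- (g * ln (m + g)))).
  rewrite Rabs_Ropp, Habs. intros. apply Rabs_le; split; lra.
Qed.

(* Chosen so that (1 + g) (|ln g| + ln (1 + g) + 3 ln n) + 4 + g <= shift_const g * ln n once ln n >= 1/2. *)
Definition shift_const (g : R) : R :=
  2 * ((1 + g) * (Rabs (ln g) + ln (1 + g)) + 4 + g) + 3 * (1 + g).

Lemma shift_const_nonneg g : 0 < g -> 0 <= shift_const g.
Proof.
intros. unfold shift_const. generalize (ln_nonneg (1 + g)) (Rabs_pos (ln g)). intros.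
assert (0 <= (1 + g) * (Rabs (ln g) + ln (1 + g))) by (apply Rmult_le_pos; lra). lra.
Qed.

Lemma ln_Gamma_shift n m g : 2 <= n -> 0 <= m <= n * n -> 0 < g ->
  0 < Gamma (m + g) /\ Rabs (ln (Gamma (m + g)) - (xlnx m - m)) <= shift_const g * ln n.
Proof.
intros Hn Hm Hg.
destruct (ln_Gamma_approx (m + g) ltac:(lra)) as [HG HB]. split; auto.
assert (Hly := Rabs_ln_shift_le n m g Hn Hm Hg).
assert (Hphi := xlnx_shift_le m g (proj1 Hm) Hg).
assert (T : Rabs (ln (Gamma (m + g)) - (xlnx m - m)) <= (1 + g) * Rabs (ln (m + g)) + 4 + g).
{ replace (ln (Gamma (m + g)) - (xlnx m - m)) with ((ln (Gamma (m + g)) - ((m + g) * ln (m + g) - (m + g)))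
    + (((m + g) * ln (m + g) - (m + g)) - (xlnx m - m))) by ring.
  eapply Rle_trans; [apply Rabs_triang|]. lra. }
assert (HL := ln_ge_half n Hn).
set (c := Rabs (ln g) + ln (1 + g)) in *.
assert (0 <= c) by (unfold c; generalize (ln_nonneg (1 + g)) (Rabs_pos (ln g)); lra).
assert ((1 + g) * Rabs (ln (m + g)) <= (1 + g) * (c + 3 * ln n)) by (apply Rmult_le_compat_l; lra).
assert (((1 + g) * c + 4 + g) * 1 <= ((1 + g) * c + 4 + g) * (2 * ln n)).
{ apply Rmult_le_compat_l; [|lra]. assert (0 <= (1 + g) * c) by (apply Rmult_le_pos; lra). lra. }
unfold shift_const. fold c. lra.
Qed.

Lemma ML_term_entropy N p : 0 <= p <= N ->
  (if Req_EM_T N 0 then 0 else N * tau (p / N)) = xlnx p + xlnx (N - p) - xlnx N.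
Proof.
intros Hp. destruct (Req_EM_T N 0) as [->|HN].
- replace p with 0 by lra. rewrite Rminus_0_r, xlnx_0. ring.
- unfold tau. replace (1 - p / N) with ((N - p) / N) by (field; lra).
  rewrite Rmult_plus_distr_l, !xlnx_div, (xlnx_pos N) by lra. ring.
Qed.

Definition pair_const (b1 b2 : R) : R := shift_const b1 + shift_const b2 + shift_const (b1 + b2).

(* ln B(p + b1, N - p + b2) - N tau(p/N) is a signed sum of three shifted-Gamma errors,
   the linear terms -p, -(N - p) and +N cancelling. *)
Lemma ln_Beta_ML_term_le n p N b1 b2 : 2 <= n -> 0 <= p <= N -> N <= n * n -> 0 < b1 -> 0 < b2 ->
  Rabs (ln (Beta (p + b1) (N - p + b2)) - (if Req_EM_T N 0 then 0 else N * tau (p / N)))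
    <= pair_const b1 b2 * ln n.
Proof.
intros Hn Hp HN Hb1 Hb2.
destruct (ln_Gamma_shift n p b1 Hn ltac:(lra) Hb1) as [G1 B1].
destruct (ln_Gamma_shift n (N - p) b2 Hn ltac:(lra) Hb2) as [G2 B2].
destruct (ln_Gamma_shift n N (b1 + b2) Hn ltac:(lra) ltac:(lra)) as [G3 B3].
rewrite ML_term_entropy by lra. unfold Beta, pair_const.
replace (p + b1 + (N - p + b2)) with (N + (b1 + b2)) by ring.
unfold Rdiv. rewrite !ln_mult, ln_Rinv by (try apply Rinv_0_lt_compat; try apply Rmult_lt_0_compat; lra).
match goal with |- Rabs ?e <= _ => replace e with
  ((ln (Gamma (p + b1)) - (xlnx p - p)) + (ln (Gamma (N - p + b2)) - (xlnx (N - p) - (N - p)))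
   - (ln (Gamma (N + (b1 + b2))) - (xlnx N - N))) by ring end.
eapply Rle_trans; [apply Rabs_triang|]. rewrite Rabs_Ropp.
generalize (Rabs_triang (ln (Gamma (p + b1)) - (xlnx p - p))
  (ln (Gamma (N - p + b2)) - (xlnx (N - p) - (N - p)))). lra.
Qed.

(* When m + floor alpha < 2 we have m < 2 - floor alpha < 3 - alpha < 3, so xlnx m is bounded. *)
Lemma ln_Gamma_P_term_le n m alpha : 2 <= n -> 0 <= m <= n -> 0 < alpha ->
  Rabs (ln (Gamma (m + alpha)) - (if Rle_dec 2 (m + IZR (Int_part alpha)) then xlnx m else 0) + m)
    <= (shift_const alpha + 12) * ln n.
Proof.
intros Hn Hm Ha.
destruct (ln_Gamma_shift n m alpha Hn ltac:(nra) Ha) as [_ B].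
assert (HL := ln_ge_half n Hn).
destruct (Rle_dec 2 (m + IZR (Int_part alpha))).
- replace (ln (Gamma (m + alpha)) - xlnx m + m) with (ln (Gamma (m + alpha)) - (xlnx m - m)) by ring. lra.
- destruct (base_Int_part alpha) as [_ HI].
  assert (Hs := Rabs_xlnx_lt_3 m ltac:(lra)).
  replace (ln (Gamma (m + alpha)) - 0 + m) with ((ln (Gamma (m + alpha)) - (xlnx m - m)) + xlnx m) by ring.
  eapply Rle_trans; [apply Rabs_triang|]. lra.
Qed.

Lemma ind_bounds b : 0 <= ind b <= 1.
Proof. destruct b; simpl; lra. Qed.

Lemma n_a_bounds n e a : 0 <= n_a n e a <= INR n.
Proof.
unfold n_a. induction n; simpl rsum; [simpl; lra|].
rewrite S_INR. generalize (ind_bounds (Nat.eqb (e n) a)); lra.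
Qed.

Lemma n_ab_le n e a b : n_ab n e a b <= INR n * INR n.
Proof.
generalize (n_a_bounds n e a) (n_a_bounds n e b). intros.
unfold n_ab. destruct (Nat.eqb a b); nra.
Qed.

Lemma rsum_ind_classes K v :
  rsum K (fun a' => ind (Nat.eqb v (S a'))) = if (1 <=? v)%nat && (v <=? K)%nat then 1 else 0.
Proof.
induction K as [|K IHK]; simpl rsum.
- destruct v; reflexivity.
- rewrite IHK.
  destruct (Nat.eqb_spec v (S K)) as [->|Hne]; simpl ind.
  + replace ((1 <=? S K)%nat && (S K <=? K)%nat) with false
      by (symmetry; apply andb_false_iff; right; apply Nat.leb_gt; lia).
    replace ((1 <=? S K)%nat && (S K <=? S K)%nat) with true
      by (symmetry; apply andb_true_iff; split; apply Nat.leb_le; lia).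
    ring.
  + destruct (1 <=? v)%nat; simpl; [|ring].
    destruct (v <=? K)%nat eqn:E2; destruct (v <=? S K)%nat eqn:E3; try ring.
    * apply Nat.leb_le in E2. apply Nat.leb_gt in E3. lia.
    * apply Nat.leb_gt in E2. apply Nat.leb_le in E3. lia.
Qed.

Lemma sum_classes_n_a n K e : labelling n K e -> sum_classes K (fun a => n_a n e a) = INR n.
Proof.
intros Hl. unfold sum_classes, n_a. rewrite <- rsum_exchange.
rewrite (rsum_ext n _ (fun _ => 1)); [rewrite rsum_const; ring|].
intros i Hi. rewrite rsum_ind_classes. destruct (Hl i Hi).
replace ((1 <=? e i)%nat && (e i <=? K)%nat) with true; auto.
symmetry. apply andb_true_iff. split; apply Nat.leb_le; lia.
Qed.

Lemma rsum_pairs_lt_indicator n (c : nat -> R) : (forall i, c i * (c i - 1) = 0) ->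
  rsum n (fun j => c j * rsum j c) = rsum n c * (rsum n c - 1) / 2.
Proof.
intros Hc. induction n; simpl; [field|]. rewrite IHn.
generalize (Hc n). intros. nra.
Qed.

Lemma O_ab_bounds n A e a b : adjacency n A -> 0 <= O_ab n A e a b <= n_ab n e a b.
Proof.
intros [H01 _].
assert (HA : forall i j, (i < n)%nat -> (j < n)%nat -> 0 <= A i j <= 1)
  by (intros i j Hi Hj; destruct (H01 i j Hi Hj) as [-> | ->]; lra).
assert (Hterm : forall i j a b, (i < n)%nat -> (j < n)%nat ->
  0 <= A i j * ind (Nat.eqb (e i) a) * ind (Nat.eqb (e j) b)
    <= ind (Nat.eqb (e i) a) * ind (Nat.eqb (e j) b)).
{ intros i j a' b' Hi Hj. generalize (HA i j Hi Hj) (ind_bounds (Nat.eqb (e i) a'))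
    (ind_bounds (Nat.eqb (e j) b')). intros.
  assert (0 <= ind (Nat.eqb (e i) a') * ind (Nat.eqb (e j) b')) by (apply Rmult_le_pos; lra).
  split; nra. }
unfold O_ab, n_ab, n_a. destruct (Nat.eqb a b); split.
- apply rsum_nonneg; intros j Hj. apply rsum_nonneg; intros i Hi. apply Hterm; lia.
- rewrite <- rsum_pairs_lt_indicator by (intros; destruct (Nat.eqb (e i) a); simpl; ring).
  apply rsum_le; intros j Hj. rewrite Rmult_comm, <- rsum_scal_r.
  apply rsum_le; intros i Hi. apply Hterm; lia.
- apply rsum_nonneg; intros i Hi. apply rsum_nonneg; intros j Hj. apply Hterm; lia.
- rewrite <- rsum_scal_r. apply rsum_le; intros i Hi. rewrite <- rsum_scal_l.
  apply rsum_le; intros j Hj. apply Hterm; lia.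
Qed.

Lemma INR_ge_2 n : (2 <= n)%nat -> 2 <= INR n.
Proof. intros. replace 2 with (INR 2) by (simpl; ring). now apply le_INR. Qed.

(* The -1/n in Q_P absorbs the linear terms -n_a of Stirling's formula, since they sum to -n. *)
Lemma Q_B_ML_P_split n K alpha b1 b2 A e : (2 <= n)%nat -> labelling n K e ->
  Q_B n K alpha b1 b2 A e - Q_ML n K A e - Q_P n K alpha e =
  / (INR n ^ 2) * (sum_pairs K (fun a b =>
      ln (Beta (O_ab n A e a b + b1) (n_ab n e a b - O_ab n A e a b + b2))
      - (if Req_EM_T (n_ab n e a b) 0 then 0 else n_ab n e a b * tau (O_ab n A e a b / n_ab n e a b)))
   + sum_classes K (fun a => ln (Gamma (n_a n e a + alpha))
      - (if Rle_dec 2 (n_a n e a + IZR (Int_part alpha)) then xlnx (n_a n e a) else 0) + n_a n e a)).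
Proof.
intros Hn He. generalize (INR_ge_2 n Hn). intros.
rewrite sum_pairs_minus, sum_classes_plus_minus, sum_classes_n_a by auto.
unfold Q_B, Q_ML, Q_P. field. lra.
Qed.

Definition modularity_const (K : nat) (alpha b1 b2 : R) : R :=
  INR K * (INR K * pair_const b1 b2) + INR K * (shift_const alpha + 12).

Lemma modularity_const_nonneg K alpha b1 b2 : 0 < alpha -> 0 < b1 -> 0 < b2 ->
  0 <= modularity_const K alpha b1 b2.
Proof.
intros. unfold modularity_const, pair_const.
generalize (pos_INR K) (shift_const_nonneg b1) (shift_const_nonneg b2)
  (shift_const_nonneg (b1 + b2)) (shift_const_nonneg alpha). intros.
assert (0 <= INR K * (shift_const b1 + shift_const b2 + shift_const (b1 + b2))) by (apply Rmult_le_pos; lra).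
assert (0 <= INR K * (INR K * (shift_const b1 + shift_const b2 + shift_const (b1 + b2)))) by (apply Rmult_le_pos; lra).
assert (0 <= INR K * (shift_const alpha + 12)) by (apply Rmult_le_pos; lra). lra.
Qed.

Lemma Rabs_Q_B_ML_P_le n K alpha b1 b2 A e : 0 < alpha -> 0 < b1 -> 0 < b2 ->
  (2 <= n)%nat -> adjacency n A -> labelling n K e ->
  Rabs (Q_B n K alpha b1 b2 A e - Q_ML n K A e - Q_P n K alpha e)
    <= modularity_const K alpha b1 b2 * ln (INR n) / (INR n ^ 2).
Proof.
intros Ha Hb1 Hb2 Hn HA He.
assert (Hnr := INR_ge_2 n Hn).
assert (HL : 0 <= ln (INR n)) by (apply ln_nonneg; lra).
assert (Hinv : 0 < / (INR n ^ 2)) by (apply Rinv_0_lt_compat, pow_lt; lra).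
rewrite Q_B_ML_P_split by auto.
unfold Rdiv. rewrite Rabs_mult, (Rabs_right (/ _)), Rmult_comm by lra.
apply Rmult_le_compat_r; [lra|].
unfold modularity_const. rewrite Rmult_plus_distr_r, !Rmult_assoc.
eapply Rle_trans; [apply Rabs_triang|]. apply Rplus_le_compat.
- apply sum_pairs_abs_le.
  + apply Rmult_le_pos; auto. unfold pair_const.
    generalize (shift_const_nonneg b1 Hb1) (shift_const_nonneg b2 Hb2)
      (shift_const_nonneg (b1 + b2) ltac:(lra)); lra.
  + intros a b. destruct (O_ab_bounds n A e a b HA).
    apply ln_Beta_ML_term_le; auto. apply n_ab_le.
- apply sum_classes_abs_le. intros a.
  apply ln_Gamma_P_term_le; auto. apply n_a_bounds.
Qed.

Lemma Rabs_Q_P_le n K alpha e : (2 <= n)%nat ->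
  Rabs (Q_P n K alpha e) <= (3 * INR K + 2) * ln (INR n) / INR n.
Proof.
intros Hn. assert (Hnr := INR_ge_2 n Hn). set (N := INR n) in *.
assert (HL := ln_ge_half N Hnr). assert (HK := pos_INR K).
assert (HS : Rabs (sum_classes K (fun a =>
    if Rle_dec 2 (n_a n e a + IZR (Int_part alpha)) then xlnx (n_a n e a) else 0))
    <= INR K * (N * ln N + 1)).
{ apply sum_classes_abs_le. intros a. destruct (Rle_dec _ _).
  - apply Rabs_xlnx_le; [lra | apply n_a_bounds].
  - rewrite Rabs_R0. generalize (ln_nonneg N). intros. nra. }
unfold Q_P. fold N. set (S := sum_classes K _) in *.
set (u := / N). assert (Hu : 0 < u <= / 2) by (split; [apply Rinv_0_lt_compat | apply Rinv_le_contravar]; lra).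
replace (/ (N ^ 2)) with (u * u) by (unfold u; field; lra).
assert (HNu : N * u = 1) by (unfold u; field; lra).
unfold Rdiv. fold u.
eapply Rle_trans; [apply Rabs_triang|].
rewrite Rabs_Ropp, Rabs_mult, !(Rabs_right u) by lra.
rewrite Rabs_right by nra.
assert (u * u * Rabs S <= u * u * (INR K * (N * ln N + 1))) by (apply Rmult_le_compat_l; nra).
assert (u * u * (INR K * (N * ln N + 1)) = INR K * ln N * u + INR K * (u * u))
  by (transitivity (INR K * ln N * u * (N * u) + INR K * (u * u)); [ring | rewrite HNu; ring]).
assert (INR K * (u * u) <= INR K * (2 * ln N * u)) by (apply Rmult_le_compat_l; nra).
nra.
Qed.

Lemma Rabs_Q_B_ML_le n K alpha b1 b2 A e : 0 < alpha -> 0 < b1 -> 0 < b2 ->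
  (2 <= n)%nat -> adjacency n A -> labelling n K e ->
  Rabs (Q_B n K alpha b1 b2 A e - Q_ML n K A e)
    <= (modularity_const K alpha b1 b2 + 3 * INR K + 2) * ln (INR n) / INR n.
Proof.
intros Ha Hb1 Hb2 Hn HA He.
assert (M := Rabs_Q_B_ML_P_le n K alpha b1 b2 A e Ha Hb1 Hb2 Hn HA He).
assert (P := Rabs_Q_P_le n K alpha e Hn).
assert (HC := modularity_const_nonneg K alpha b1 b2 Ha Hb1 Hb2).
assert (Hnr := INR_ge_2 n Hn). set (N := INR n) in *.
assert (HL := ln_ge_half N Hnr).
replace (Q_B n K alpha b1 b2 A e - Q_ML n K A e)
  with ((Q_B n K alpha b1 b2 A e - Q_ML n K A e - Q_P n K alpha e) + Q_P n K alpha e) by ring.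
eapply Rle_trans; [apply Rabs_triang|].
assert (modularity_const K alpha b1 b2 * ln N / N ^ 2 <= modularity_const K alpha b1 b2 * ln N / N).
{ unfold Rdiv. apply Rmult_le_compat_l; [apply Rmult_le_pos; lra|].
  apply Rinv_le_contravar; [lra|]. simpl. nra. }
unfold Rdiv in *. lra.
Qed.

Theorem lemma3p1 (K : nat) (alpha b1 b2 : R) :
  (1 <= K)%nat -> 0 < alpha -> 0 < b1 -> 0 < b2 ->
  (exists C : R, forall (n : nat) (A : nat -> nat -> R), (2 <= n)%nat -> adjacency n A ->
     forall e : nat -> nat, labelling n K e ->
       Rabs (Q_B n K alpha b1 b2 A e - Q_ML n K A e - Q_P n K alpha e)
         <= C * ln (INR n) / (INR n ^ 2))
  /\
  (exists C' : R, forall (n : nat) (A : nat -> nat -> R), (2 <= n)%nat -> adjacency n A ->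
     forall e : nat -> nat, labelling n K e ->
       Rabs (Q_B n K alpha b1 b2 A e - Q_ML n K A e) <= C' * ln (INR n) / INR n).
Proof.
intros _ Ha Hb1 Hb2. split.
- exists (modularity_const K alpha b1 b2). intros. now apply Rabs_Q_B_ML_P_le.
- exists (modularity_const K alpha b1 b2 + 3 * INR K + 2). intros. now apply Rabs_Q_B_ML_le.
Qed.
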